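(* Let $\Omega\subset\mathbb{R}^2$ be open, $\lambda>0$, and let $u\in L^2(\Omega)$ satisfy $-\Delta u=\lambda u$ in $\Omega$. Let $\mathbf{x}_0\in\Omega$, $h>0$, $\alpha\in(0,1)$, and let $\mathbf{e}^-,\mathbf{e}^+$ be unit vectors with angle $\alpha\pi$ from $\mathbf{e}^-$ to $\mathbf{e}^+$; put $\Gamma^\pm=\{\mathbf{x}_0+t\mathbf{e}^\pm:0\le t\le h\}\subset\Omega$. Suppose $u=0$ on $\Gamma^+\cup\Gamma^-$ (both are nodal lines). Let $n\in\mathbb{N}$, $n\ge3$. If $\alpha\neq q/p$ for all integers $1\le q<p\le n-1$, then $u$ vanishes up to the order $n$ at $\mathbf{x}_0$, i.e. all partial derivatives of $u$ of order at most $n-1$ vanish at $\mathbf{x}_0$.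
   Context: No boundary condition is imposed on $\partial\Omega$; $u$ is real-analytic in $\Omega$. ''Vanishes up to order $n$'' means every homogeneous term of degree $<n$ in the Taylor expansion of $u$ at $\mathbf{x}_0$ vanishes. *)

From HB Require Import structures.
From mathcomp Require Import all_boot all_order all_algebra.
From mathcomp Require Import all_classical all_reals all_analysis.
Set Implicit Arguments. Unset Strict Implicit. Unset Printing Implicit Defensive.
Import Order.TTheory GRing.Theory Num.Theory numFieldNormedType.Exports.
Local Open Scope classical_set_scope.
Local Open Scope ring_scope.

Definition pdx {R : realType} (f : R * R -> R) : R * R -> R :=
  fun p => derive1 (fun t : R => f (t, p.2)) p.1.
Definition pdy {R : realType} (f : R * R -> R) : R * R -> R :=
  fun p => derive1 (fun t : R => f (p.1, t)) p.2.

(* iterated partial derivative along the list of directions s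
   (true = d/dx1, false = d/dx2); its order is size s *)
Definition pderiv {R : realType} (s : seq bool) (f : R * R -> R) : R * R -> R :=
  foldr (fun b g => if b then pdx g else pdy g) f s.

Definition smooth_on {R : realType} (O : set (R * R)) (f : R * R -> R) : Prop :=
  forall s : seq bool,
    forall p, O p ->
      {for p, continuous (pderiv s f)} /\
      derivable (fun t : R => pderiv s f (t, p.2)) p.1 1 /\
      derivable (fun t : R => pderiv s f (p.1, t)) p.2 1.

Definition laplacian {R : realType} (f : R * R -> R) : R * R -> R :=
  fun p => pdx (pdx f) p + pdy (pdy f) p.

Definition L2_on {R : realType} (O : set (R * R)) (u : R * R -> R) : Prop :=
  ((@lebesgue_measure R) \x (@lebesgue_measure R))%E.-integrable O
     (fun p => ((u p) ^+ 2)%:E).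

Definition segment {R : realType} (x0 e : R * R) (h : R) : set (R * R) :=
  [set x | exists t : R, 0 <= t <= h /\ x = (x0.1 + t * e.1, x0.2 + t * e.2)].

From HB Require Import structures.
From mathcomp Require Import all_boot all_order all_algebra.
From mathcomp Require Import all_classical all_reals all_analysis.
From mathcomp Require Import ring lra zify.
Set Implicit Arguments. Unset Strict Implicit. Unset Printing Implicit Defensive.
Import Order.TTheory GRing.Theory Num.Theory numFieldNormedType.Exports.
Local Open Scope classical_set_scope.
Local Open Scope ring_scope.

(* Induction on the order K.  Let all
   derivatives of order < K vanish at x0, and put a_j = dx^j dy^(K-j) u (x0).
   Since u vanishes on a segment x0 + t e, so does every directional derivative
   (e.grad)^K u along it (a mean value argument), hence also at x0.  Mixed
   partials commute, and differentiating the Helmholtz equation K - 2 times gives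
   a_(j+2) = - a_j - lambda * 0, so a_j = a_0 cos (j pi/2) + a_1 sin (j pi/2) and
   (e.grad)^K u (x0) = a_0 cos (K (pi/2 - phi)) + a_1 sin (K (pi/2 - phi)) for
   e = (cos phi, sin phi).  The two nodal directions give a 2x2 linear system in
   a_0, a_1 whose determinant is +- sin (K alpha pi), nonzero as K alpha is not
   an integer; hence a_0 = a_1 = 0 and all derivatives of order K vanish. *)

Section Derivatives.
Variable R : realType.

Lemma MVT_centered (f df : R -> R) (x d : R) :
  (forall y, `|y - x| <= `|d| -> is_derive y 1 f (df y)) ->
  exists2 c, `|c - x| <= `|d| & f (x + d) - f x = d * df c.
Proof.
move=> fd.
have MVT_in a b : a <= b -> `|a - x| <= `|d| -> `|b - x| <= `|d| ->
    exists2 c, `|c - x| <= `|d| & f b - f a = (b - a) * df c.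
  move=> ab; rewrite !ler_norml => /andP[a1 a2] /andP[b1 b2].
  have between y : a <= y <= b -> `|y - x| <= `|d|.
    by move=> /andP[ay yb]; rewrite ler_norml; apply/andP; split; lra.
  have fd_ab y : y \in `]a, b[ -> is_derive y 1 f (df y).
    by move=> /[!in_itv]/= /andP[ay yb]; apply: fd; rewrite between ?ltW ?ay.
  have fc_ab : {within `[a, b], continuous f}.
    apply: derivable_within_continuous => y /[!in_itv]/= aby.
    by have [] := fd y (between y aby).
  have [c /[!in_itv]/= cab ->] := MVT_segment ab fd_ab fc_ab.
  by exists c; rewrite ?between // mulrC.
have dd : `|x + d - x| <= `|d| by rewrite addrC addKr.
have xx : `|x - x| <= `|d| by rewrite subrr normr0.
case: (leP 0 d) => d0.
  have [|c cx ->] := MVT_in x (x + d) _ xx dd; first lra.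
  by exists c; rewrite // addrC addKr.
have [|c cx E] := MVT_in (x + d) x _ dd xx; first lra.
by exists c => //; rewrite -opprB E; ring.
Qed.

Lemma MVT_staircase (g gx gy : R * R -> R) (x y a b : R) :
  (forall s t, `|s - x| <= `|a| -> `|t - y| <= `|b| ->
     is_derive s 1 (fun s => g (s, t)) (gx (s, t)) /\
     is_derive t 1 (fun t => g (s, t)) (gy (s, t))) ->
  exists2 c : R * R, `|c.1 - x| <= `|a| /\ `|c.2 - y| <= `|b| &
    g (x + a, y + b) - g (x, y) = a * gx (c.1, y + b) + b * gy (x, c.2).
Proof.
move=> gd.
have yb : `|y + b - y| <= `|b| by rewrite addrC addKr.
have xx : `|x - x| <= `|a| by rewrite subrr normr0.
have [c1 c1x E1] := MVT_centered (fun s sx => (gd s _ sx yb).1).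
have [c2 c2y E2] := MVT_centered (fun t ty => (gd x t xx ty).2).
by exists (c1, c2) => //; rewrite -E1 -E2; ring.
Qed.

Lemma MVT_second_difference (g gs gst : R -> R -> R) (x y h : R) :
  (forall s t, `|s - x| <= `|h| -> `|t - y| <= `|h| ->
     is_derive s 1 (g^~ t) (gs s t) /\ is_derive t 1 (gs s) (gst s t)) ->
  exists2 c : R * R, `|c.1 - x| <= `|h| /\ `|c.2 - y| <= `|h| &
    g (x + h) (y + h) - g (x + h) y - g x (y + h) + g x y = h ^+ 2 * gst c.1 c.2.
Proof.
move=> gd.
have yh : `|y + h - y| <= `|h| by rewrite addrC addKr.
have yy : `|y - y| <= `|h| by rewrite subrr normr0.
have [c1 c1x E1] := @MVT_centered (fun s => g s (y + h) - g s y)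
  (fun s => gs s (y + h) - gs s y) x h
  (fun s sx => is_deriveB (gd s _ sx yh).1 (gd s _ sx yy).1).
have [c2 c2y E2] := MVT_centered (fun t ty => (gd c1 t c1x ty).2).
exists (c1, c2) => //=; move: E1 => /= E1.
by rewrite expr2 -mulrA -E2 -E1; ring.
Qed.

Lemma is_derive_sum (I : Type) (r : seq I) (F : I -> R -> R) (dF : I -> R) (t : R) :
  (forall i, is_derive t 1 (F i) (dF i)) ->
  is_derive t 1 (fun s => \sum_(i <- r) F i s) (\sum_(i <- r) dF i).
Proof.
move=> Fd; elim: r => [|i r IH].
  have -> : (fun s => \sum_(i <- [::]) F i s) = cst 0.
    by apply/funext => s; rewrite big_nil.
  by rewrite big_nil; exact: is_derive_cst.
have -> : (fun s => \sum_(j <- i :: r) F j s) = F i + (fun s => \sum_(j <- r) F j s).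
  by apply/funext => s; rewrite big_cons.
by rewrite big_cons; exact: is_deriveD.
Qed.

Lemma derive1_comb (phi psi : R -> R) (a b t : R) :
  derivable phi t 1 -> derivable psi t 1 ->
  derive1 (fun r => a * phi r + b * psi r) t = a * derive1 phi t + b * derive1 psi t.
Proof.
move=> /derivableP dphi /derivableP dpsi.
by rewrite !derive1E; apply: derive_val.
Qed.

End Derivatives.

Section Squares.
Variable R : realType.

Lemma eq0_norm_lt (x : R) : (forall e, 0 < e -> `|x| < e) -> x = 0.
Proof.
move=> small; apply/normr0_eq0/le_anti; rewrite normr_ge0 andbT.
by apply/ler_addgt0Pr => e e0; rewrite add0r ltW ?small.
Qed.

Definition closed_square (p : R * R) (h : R) : set (R * R) :=
  [set q | `|q.1 - p.1| <= h /\ `|q.2 - p.2| <= h].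

Lemma near_closed_square (p : R * R) (A : set (R * R)) :
  nbhs p A -> \forall h \near 0^'+, closed_square p h `<=` A.
Proof.
move=> /nbhs_ballP[d d0 dA]; near=> h => q [q1 q2]; apply: dA.
have hd : h < d by near: h; exact: nbhs_right_lt.
by split; rewrite /ball /= distrC; apply: le_lt_trans hd.
Unshelve. all: by end_near. Qed.

Lemma continuous_eq_near_square (F G : R * R -> R) (p : R * R) :
  {for p, continuous F} -> {for p, continuous G} ->
  (\forall h \near 0^'+, exists c c',
     [/\ closed_square p h c, closed_square p h c' & F c = G c']) ->
  F p = G p.
Proof.
move=> /cvgrPdist_lt cF /cvgrPdist_lt cG near_eq.
apply/eqP; rewrite -subr_eq0; apply/eqP/eq0_norm_lt => e e0.
have e2 : 0 < e / 2 by rewrite divr_gt0.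
near (0 : R)^'+ => h.
have sqF : closed_square p h `<=` [set q | `|F p - F q| < e / 2].
  by near: h; apply: near_closed_square; exact: cF.
have sqG : closed_square p h `<=` [set q | `|G p - G q| < e / 2].
  by near: h; apply: near_closed_square; exact: cG.
have [c [c' [pc pc' E]]] : exists c c',
    [/\ closed_square p h c, closed_square p h c' & F c = G c'].
  by near: h; exact: near_eq.
rewrite (_ : F p - G p = (F p - F c) - (G p - G c')); last by rewrite E; ring.
rewrite [e]splitr; apply: le_lt_trans (ler_normB _ _) _.
by rewrite ltrD ?sqF ?sqG.
Unshelve. all: by end_near. Qed.

Definition ray (p v : R * R) (t : R) : R * R := (p.1 + t * v.1, p.2 + t * v.2).

Lemma closed_square_ray (p v : R * R) (h : R) : 0 <= h ->
  `|v.1| <= 1 -> `|v.2| <= 1 -> closed_square p h (ray p v h).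
Proof.
move=> h0 v1 v2; rewrite /closed_square /ray /=.
by split; rewrite addrC addKr normrM (ger0_norm h0) ler_piMr.
Qed.

Lemma ray0 (p v : R * R) : ray p v 0 = p.
Proof. by case: p => x y; rewrite /ray /= !mul0r !addr0. Qed.

Lemma ray_rayD (p v : R * R) (t s : R) : ray (ray p v t) v s = ray p v (t + s).
Proof. by rewrite /ray /= !mulrDl !addrA. Qed.

Lemma segment_ray (p v : R * R) (h t : R) : 0 <= t <= h -> segment p v h (ray p v t).
Proof. by exists t. Qed.

Lemma continuous_ray_eq0 (F : R * R -> R) (p v : R * R) :
  {for p, continuous F} -> `|v.1| <= 1 -> `|v.2| <= 1 ->
  (\forall t \near 0^'+, F (ray p v t) = 0) -> F p = 0.
Proof.
move=> cF v1 v2 Fray.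
apply: (continuous_eq_near_square cF (@cst_continuous _ _ 0 p)).
near=> h; have h0 : 0 <= h by apply: ltW; near: h; exact: nbhs_right_gt.
exists (ray p v h), p; split; first exact: closed_square_ray.
  by rewrite /closed_square /= !subrr normr0.
by near: h; exact: Fray.
Unshelve. all: by end_near. Qed.

End Squares.

Section Trigonometry.
Variable R : realType.

Lemma sin_mulpi_eq0 (x : R) : 0 <= x -> sin (x * pi) = 0 -> x = (Num.truncn x)%:R.
Proof.
move=> x0 sx0; apply/eqP; rewrite eq_sym; apply/negPn/negP => xj.
have [/andP[jx xj1]] := archimedean.Num.Theory.truncn_itv x0.
set j := Num.truncn x in xj jx xj1 *.
have frac0 : 0 < x - j%:R by rewrite subr_gt0 lt_neqAle xj jx.
have frac1 : x - j%:R < 1 by lra.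
have sin_frac : sin ((x - j%:R) * pi) != 0.
  apply/lt0r_neq0/sin_gt0_pi; rewrite mulr_gt0 ?pi_gt0 //.
  by rewrite -[ltRHS]mul1r ltr_pM2r ?pi_gt0.
move: sx0; rewrite (_ : x * pi = (x - j%:R) * pi + pi *+ j); last first.
  by rewrite mulrBl -mulr_natl; ring.
rewrite (alternatingn (@sinDpi R)) => /eqP.
by rewrite mulf_eq0 signr_eq0 (negbTE sin_frac).
Qed.

Lemma sin_natmul_neq0 (k : nat) (al : R) : (0 < k)%N -> 0 < al < 1 ->
  (forall q : nat, (1 <= q)%N -> (q < k)%N -> al != q%:R / k%:R) ->
  sin (k%:R * al * pi) != 0.
Proof.
move=> k0 /andP[al0 al1] al_nfrac; apply/eqP => sin0.
have kpos : 0 < k%:R :> R by rewrite ltr0n.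
have := sin_mulpi_eq0 (ltW (mulr_gt0 kpos al0)) sin0.
set j := Num.truncn _ => kal_j.
have j0 : (0 < j)%N by rewrite -(ltr_nat R) -kal_j mulr_gt0.
have jk : (j < k)%N by rewrite -(ltr_nat R) -kal_j -[ltRHS]mulr1 ltr_pM2l.
by move: (al_nfrac j j0 jk); rewrite -kal_j mulrC mulKf ?eqxx // pnatr_eq0 -lt0n.
Qed.

Lemma antiperiodic2_cos_sin (a : nat -> R) (K : nat) :
  (forall j, (j.+2 <= K)%N -> a j.+2 = - a j) ->
  forall j, (j <= K)%N ->
    a j = a 0%N * cos (j%:R * (pi / 2)) + a 1%N * sin (j%:R * (pi / 2)).
Proof.
move=> rec; elim/ltn_ind => -[_|[_|j IH jK]].
- by rewrite mul0r cos0 sin0 mulr1 mulr0 addr0.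
- by rewrite mul1r cos_pihalf sin_pihalf mulr0 mulr1 add0r.
have shift : j.+2%:R * (pi / 2) = j%:R * (pi / 2) + pi :> R.
  by rewrite -[j.+2]addn2 natrD; field.
rewrite rec // IH //; last by lia.
by rewrite shift cosDpi sinDpi; ring.
Qed.

End Trigonometry.

Lemma cramer2_eq0 (K : idomainType) (a b c d c' d' : K) :
  a * c + b * d = 0 -> a * c' + b * d' = 0 -> c * d' - c' * d != 0 -> a = 0 /\ b = 0.
Proof.
move=> E E' det0.
have det_reg x : x * (c * d' - c' * d) = 0 -> x = 0.
  by move/eqP; rewrite mulf_eq0 (negbTE det0) orbF => /eqP.
split; apply: det_reg.
  have -> : a * (c * d' - c' * d) = d' * (a * c + b * d) - d * (a * c' + b * d').
    by ring.
  by rewrite E E' !mulr0 subr0.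
have -> : b * (c * d' - c' * d) = c * (a * c' + b * d') - c' * (a * c + b * d).
  by ring.
by rewrite E E' !mulr0 subr0.
Qed.

Section PartialDerivatives.
Variables (R : realType) (O : set (R * R)).
Hypothesis oO : open O.
Implicit Types (f g : R * R -> R) (s : seq bool) (p : R * R).

Lemma pderiv_cons b s f :
  pderiv (b :: s) f = if b then pdx (pderiv s f) else pdy (pderiv s f).
Proof. by []. Qed.

Lemma pderiv_cat s1 s2 f : pderiv (s1 ++ s2) f = pderiv s1 (pderiv s2 f).
Proof. exact: foldr_cat. Qed.

Lemma smooth_on_pderiv s f : smooth_on O f -> smooth_on O (pderiv s f).
Proof. by move=> sf t p Op; rewrite -pderiv_cat; exact: sf. Qed.

Lemma continuous_pderiv s f p : smooth_on O f -> O p ->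
  {for p, continuous (pderiv s f)}.
Proof. by move=> sf Op; have [] := sf s p Op. Qed.

Lemma is_derive_pdx f p : smooth_on O f -> O p ->
  is_derive p.1 1 (fun t => f (t, p.2)) (pdx f p).
Proof.
move=> sf Op; have [_ [fx _]] := sf [::] p Op.
by rewrite /pdx derive1E; exact: derivableP.
Qed.

Lemma is_derive_pdy f p : smooth_on O f -> O p ->
  is_derive p.2 1 (fun t => f (p.1, t)) (pdy f p).
Proof.
move=> sf Op; have [_ [_ fy]] := sf [::] p Op.
by rewrite /pdy derive1E; exact: derivableP.
Qed.

Lemma near_section_x p : O p -> \forall t \near p.1, O (t, p.2).
Proof.
move=> /oO /nbhs_ballP[d d0 dO]; apply/nbhs_ballP; exists d => // t pt.
by apply: dO; split => //=; exact: ballxx.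
Qed.

Lemma near_section_y p : O p -> \forall t \near p.2, O (p.1, t).
Proof.
move=> /oO /nbhs_ballP[d d0 dO]; apply/nbhs_ballP; exists d => // t pt.
by apply: dO; split => //=; exact: ballxx.
Qed.

Lemma pderiv_eq_on s f g p : (forall q, O q -> f q = g q) -> O p ->
  pderiv s f p = pderiv s g p.
Proof.
move=> fg; elim: s p => [|b s IH] p Op; first exact: fg.
rewrite !pderiv_cons /pdx /pdy; case: b => /=; rewrite !derive1E;
  apply: near_eq_derive.
  by near=> t; apply: IH; near: t; exact: near_section_x.
by near=> t; apply: IH; near: t; exact: near_section_y.
Unshelve. all: by end_near. Qed.

Lemma pdx_comb f g a b p : smooth_on O f -> smooth_on O g -> O p ->
  pdx (fun q => a * f q + b * g q) p = a * pdx f p + b * pdx g p.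
Proof. by move=> sf sg Op; exact: derive1_comb (sf [::] p Op).2.1 (sg [::] p Op).2.1. Qed.

Lemma pdy_comb f g a b p : smooth_on O f -> smooth_on O g -> O p ->
  pdy (fun q => a * f q + b * g q) p = a * pdy f p + b * pdy g p.
Proof. by move=> sf sg Op; exact: derive1_comb (sf [::] p Op).2.2 (sg [::] p Op).2.2. Qed.

Lemma pderiv_comb s f g a b p : smooth_on O f -> smooth_on O g -> O p ->
  pderiv s (fun q => a * f q + b * g q) p = a * pderiv s f p + b * pderiv s g p.
Proof.
move=> sf sg; elim: s p => [|c s IH] p Op //.
have [sfs sgs] := (smooth_on_pderiv s sf, smooth_on_pderiv s sg).
transitivity (pderiv [:: c] (fun q => a * pderiv s f q + b * pderiv s g q) p).
  exact: (pderiv_eq_on [:: c] IH Op).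
by case: c; [exact: pdx_comb sfs sgs Op | exact: pdy_comb sfs sgs Op].
Qed.

Lemma schwarz f p : smooth_on O f -> O p -> pdy (pdx f) p = pdx (pdy f) p.
Proof.
(* The second difference over a square of side h equals h^2 times either mixed
   derivative at some point of the square. *)
move=> sf Op; have sfx := smooth_on_pderiv [:: true] sf.
have sfy := smooth_on_pderiv [:: false] sf.
apply: continuous_eq_near_square.
- exact: (continuous_pderiv (s := [:: false; true]) sf Op).
- exact: (continuous_pderiv (s := [:: true; false]) sf Op).
case: p Op => x y Op; near=> h.
have h0 : 0 < h by near: h; exact: nbhs_right_gt.
have sqO : closed_square (x, y) h `<=` O.
  by near: h; apply: near_closed_square; exact: oO.
have Oab a b : `|a - x| <= `|h| -> `|b - y| <= `|h| -> O (a, b).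
  by rewrite (gtr0_norm h0) => ax yb; exact: sqO.
have [c c_sq Exy] := @MVT_second_difference _ (fun a b => f (a, b))
  (fun a b => pdx f (a, b)) (fun a b => pdy (pdx f) (a, b)) x y h
  (fun a b ax by_ => conj (is_derive_pdx sf (Oab a b ax by_))
                          (is_derive_pdy sfx (Oab a b ax by_))).
have [c' c'_sq Eyx] := @MVT_second_difference _ (fun b a => f (a, b))
  (fun b a => pdy f (a, b)) (fun b a => pdx (pdy f) (a, b)) y x h
  (fun b a by_ ax => conj (is_derive_pdy sf (Oab a b ax by_))
                          (is_derive_pdx sfy (Oab a b ax by_))).
rewrite (gtr0_norm h0) in c_sq c'_sq.
exists (c.1, c.2), (c'.2, c'.1); split; [by case: c_sq | by case: c'_sq |].
apply: (mulfI (_ : h ^+ 2 != 0)); first by rewrite expf_neq0 // gt_eqF.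
apply: etrans (esym Exy) (etrans _ Eyx).
by congr (_ + _); exact: addrAC.
Unshelve. all: by end_near. Qed.

Lemma pdy_pderiv_nseq j f p : smooth_on O f -> O p ->
  pdy (pderiv (nseq j true) f) p = pderiv (nseq j true) (pdy f) p.
Proof.
move=> sf; elim: j p => [|j IH] p Op //.
transitivity (pdx (pdy (pderiv (nseq j true) f)) p).
  exact: (schwarz (smooth_on_pderiv (nseq j true) sf) Op).
exact: (pderiv_eq_on [:: true] IH Op).
Qed.

Lemma pderiv_canon s f p : smooth_on O f -> O p ->
  pderiv s f p = pderiv (nseq (count id s) true ++ nseq (count negb s) false) f p.
Proof.
move=> sf; elim: s p => [|b s IH] p Op //.
case: b => /=; rewrite !add0n; first exact: (pderiv_eq_on [:: true] IH Op).
transitivity (pdy (pderiv (nseq (count id s) true) (pderiv (nseq (count negb s) false) f)) p).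
  by rewrite -pderiv_cat; exact: (pderiv_eq_on [:: false] IH Op).
by rewrite (pdy_pderiv_nseq _ (smooth_on_pderiv (nseq (count negb s) false) sf) Op)
  pderiv_cat.
Qed.

Definition mixed_pderiv f (K j : nat) p := pderiv (nseq j true ++ nseq (K - j) false) f p.

Lemma pderiv_mixed s f p : smooth_on O f -> O p ->
  pderiv s f p = mixed_pderiv f (size s) (count id s) p.
Proof.
by move=> sf Op; rewrite /mixed_pderiv (pderiv_canon s sf Op) -(count_predC id s) addKn.
Qed.

End PartialDerivatives.

Section DifferentialOperators.
Variable R : realType.

(* The operator \sum_i c_i d^(w_i) with constant coefficients is encoded as the
   list of pairs (c_i, w_i); [dop_dirn v k] is (v.1 dx + v.2 dy)^k. *)
Local Notation diffop := (seq (R * seq bool)).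

Definition dop_eval (L : diffop) (f : R * R -> R) (p : R * R) : R :=
  \sum_(c <- L) c.1 * pderiv c.2 f p.

Definition dop_dx (L : diffop) : diffop := [seq (c.1, true :: c.2) | c <- L].
Definition dop_dy (L : diffop) : diffop := [seq (c.1, false :: c.2) | c <- L].

Definition dop_dir (v : R * R) (L : diffop) : diffop :=
  [seq (v.1 * c.1, true :: c.2) | c <- L] ++ [seq (v.2 * c.1, false :: c.2) | c <- L].

Definition dop_dirn (v : R * R) (k : nat) : diffop := iter k (dop_dir v) [:: (1, [::])].

Lemma dop_eval_dir v L f p :
  dop_eval (dop_dir v L) f p = v.1 * dop_eval (dop_dx L) f p + v.2 * dop_eval (dop_dy L) f p.
Proof.
rewrite /dop_eval big_cat !big_map !mulr_sumr.
by congr (_ + _); apply: eq_bigr => c _ /=; rewrite mulrA.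
Qed.

Variables (O : set (R * R)) (f : R * R -> R).
Hypotheses (oO : open O) (sf : smooth_on O f).

Lemma is_derive_dop_dx L p : O p ->
  is_derive p.1 1 (fun t => dop_eval L f (t, p.2)) (dop_eval (dop_dx L) f p).
Proof.
move=> Op; rewrite /dop_eval big_map; apply: is_derive_sum => c.
exact: is_deriveZ (is_derive_pdx (smooth_on_pderiv c.2 sf) Op).
Qed.

Lemma is_derive_dop_dy L p : O p ->
  is_derive p.2 1 (fun t => dop_eval L f (p.1, t)) (dop_eval (dop_dy L) f p).
Proof.
move=> Op; rewrite /dop_eval big_map; apply: is_derive_sum => c.
exact: is_deriveZ (is_derive_pdy (smooth_on_pderiv c.2 sf) Op).
Qed.

Lemma continuous_dop_eval L p : O p -> {for p, continuous (dop_eval L f)}.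
Proof.
move=> Op; apply: (cvg_big add_continuous) => // c _.
exact: cvgM (cvg_cst _) (continuous_pderiv sf Op).
Qed.

Lemma dop_eval_dir_eq0 L v p : O p -> `|v.1| <= 1 -> `|v.2| <= 1 ->
  (\forall t \near 0^'+, dop_eval L f (ray p v t) = 0) ->
  dop_eval (dop_dir v L) f p = 0.
Proof.
(* The vanishing increment of [dop_eval L f] from p to [ray p v h] is h times
   v.1 dx + v.2 dy of it at two points within h of p. *)
move=> Op v1 v2 Lray.
have Lp := continuous_ray_eq0 (continuous_dop_eval (L := L) Op) v1 v2 Lray.
apply/eqP; rewrite dop_eval_dir addr_eq0; apply/eqP.
apply: (@continuous_eq_near_square _ (fun q => v.1 * dop_eval (dop_dx L) f q)
  (fun q => - (v.2 * dop_eval (dop_dy L) f q))).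
- exact: cvgM (cvg_cst _) (continuous_dop_eval Op).
- exact: cvgN (cvgM (cvg_cst _) (continuous_dop_eval Op)).
case: p Op Lp Lray => x y Op Lp Lray; near=> h.
have h0 : 0 < h by near: h; exact: nbhs_right_gt.
have sqO : closed_square (x, y) h `<=` O.
  by near: h; apply: near_closed_square; exact: oO.
have Lh : dop_eval L f (ray (x, y) v h) = 0 by near: h; exact: Lray.
have hv1 : `|h * v.1| <= h by rewrite normrM (gtr0_norm h0) ler_piMr // ltW.
have hv2 : `|h * v.2| <= h by rewrite normrM (gtr0_norm h0) ler_piMr // ltW.
have Oab a b : `|a - x| <= `|h * v.1| -> `|b - y| <= `|h * v.2| -> O (a, b).
  by move=> ax yb; apply: sqO; split => /=; [exact: le_trans hv1|exact: le_trans hv2].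
have [c [c1 c2] E] := @MVT_staircase _ (dop_eval L f) (dop_eval (dop_dx L) f)
  (dop_eval (dop_dy L) f) x y (h * v.1) (h * v.2)
  (fun a b ax yb => conj (is_derive_dop_dx L (Oab a b ax yb))
                         (is_derive_dop_dy L (Oab a b ax yb))).
exists (c.1, y + h * v.2), (x, c.2); split.
- by split => /=; [exact: le_trans hv1 | rewrite addrC addKr].
- by split => /=; [rewrite subrr normr0 ltW | exact: le_trans hv2].
apply/eqP; rewrite -addr_eq0.
have : h * (v.1 * dop_eval (dop_dx L) f (c.1, y + h * v.2) +
            v.2 * dop_eval (dop_dy L) f (x, c.2)) = 0.
  by rewrite mulrDr !mulrA -E Lh Lp subr0.
by move/eqP; rewrite mulf_eq0 gt_eqF.
Unshelve. all: by end_near. Qed.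

Lemma dop_dirn_eq0_on_segment (x0 v : R * R) (h : R) (k : nat) :
  `|v.1| <= 1 -> `|v.2| <= 1 ->
  segment x0 v h `<=` O -> (forall x, segment x0 v h x -> f x = 0) ->
  forall t, 0 < t < h -> dop_eval (dop_dirn v k) f (ray x0 v t) = 0.
Proof.
move=> v1 v2 segO f0; elim: k => [|k IH] t /andP[t0 th].
  by rewrite /dop_eval big_seq1 mul1r; apply: f0; apply: segment_ray; rewrite !ltW.
rewrite /dop_dirn iterS; apply: dop_eval_dir_eq0 => //.
  by apply: segO; apply: segment_ray; rewrite !ltW.
near=> s; rewrite ray_rayD; apply: IH; apply/andP; split.
  by rewrite addr_gt0 //; near: s; exact: nbhs_right_gt.
by rewrite -ltrBrDl; near: s; apply: nbhs_right_lt; rewrite subr_gt0.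
Unshelve. all: by end_near. Qed.

Lemma dop_dirn_eq0 (x0 v : R * R) (h : R) (k : nat) : 0 < h ->
  `|v.1| <= 1 -> `|v.2| <= 1 ->
  segment x0 v h `<=` O -> (forall x, segment x0 v h x -> f x = 0) ->
  dop_eval (dop_dirn v k) f x0 = 0.
Proof.
move=> h0 v1 v2 segO f0.
have Ox0 : O x0 by rewrite -(ray0 x0 v); apply: segO; apply: segment_ray; rewrite lexx ltW.
apply: (continuous_ray_eq0 (continuous_dop_eval (L := dop_dirn v k) Ox0) v1 v2).
near=> t; apply: (dop_dirn_eq0_on_segment _ v1 v2 segO f0); apply/andP; split.
  by near: t; exact: nbhs_right_gt.
by near: t; exact: nbhs_right_lt.
Unshelve. all: by end_near. Qed.

End DifferentialOperators.

Section Symbol.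
Variable R : realType.
Local Notation diffop := (seq (R * seq bool)).

(* The value of [dop_eval L] when every derivative of the order of L with j
   derivatives in x equals cos (g + j pi/2); see [dop_eval_symbol]. *)
Definition dop_symbol (g : R) (L : diffop) : R :=
  \sum_(c <- L) c.1 * cos (g + (count id c.2)%:R * (pi / 2)).

Lemma dop_symbol_dir v L g :
  dop_symbol g (dop_dir v L) = v.1 * dop_symbol (g + pi / 2) L + v.2 * dop_symbol g L.
Proof.
rewrite /dop_symbol big_cat !big_map !mulr_sumr.
congr (_ + _); apply: eq_bigr => c _ /=; rewrite -mulrA //.
by rewrite natrD mulrDl mul1r addrA.
Qed.

Lemma dop_symbol_dirn phi k g :
  dop_symbol g (dop_dirn (cos phi, sin phi) k) = cos (g + k%:R * (pi / 2 - phi)).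
Proof.
elim: k g => [|k IH] g; first by rewrite /dop_symbol big_seq1 mul1r !mul0r !addr0.
rewrite /dop_dirn iterS -/(dop_dirn _ k) dop_symbol_dir !IH /= (addrAC g) cosDpihalf.
set x := g + _; set b := pi / 2 - phi.
have -> : g + k.+1%:R * b = x + b by rewrite -addn1 natrD mulrDl mul1r addrA.
by rewrite cosD /b cosB sinB cos_pihalf sin_pihalf; ring.
Qed.

Lemma size_dop_dirn (v : R * R) k : all (fun c => size c.2 == k) (dop_dirn v k).
Proof.
elim: k => [|k IH] //; rewrite /dop_dirn iterS -/(dop_dirn _ k) all_cat !all_map.
by apply/andP; split; apply: sub_all IH => c.
Qed.

Lemma dop_eval_symbol (L : diffop) k f p (a0 a1 g0 g1 : R) :
  all (fun c => size c.2 == k) L ->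
  (forall s, size s = k -> pderiv s f p =
     a0 * cos (g0 + (count id s)%:R * (pi / 2)) +
     a1 * cos (g1 + (count id s)%:R * (pi / 2))) ->
  dop_eval L f p = a0 * dop_symbol g0 L + a1 * dop_symbol g1 L.
Proof.
move=> /allP Lk fk; rewrite /dop_eval /dop_symbol !mulr_sumr -big_split /=.
rewrite big_seq [RHS]big_seq; apply: eq_bigr => c cL.
by rewrite (fk _ (eqP (Lk c cL))); ring.
Qed.

End Symbol.

Section Helmholtz.
Variables (R : realType) (O : set (R * R)) (lam : R) (u : R * R -> R).
Hypotheses (oO : open O) (su : smooth_on O u).
Hypothesis helmholtz : forall p, O p -> - laplacian u p = lam * u p.

Lemma pderiv_helmholtz s p : O p ->
  pderiv (s ++ [:: true; true]) u p =
  - pderiv (s ++ [:: false; false]) u p - lam * pderiv s u p.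
Proof.
move=> Op; rewrite !pderiv_cat.
have uxx q : O q ->
    pderiv [:: true; true] u q = -1 * pderiv [:: false; false] u q + (- lam) * u q.
  move=> /helmholtz; rewrite /laplacian (mulNr lam) => <-.
  by change (pdx (pdx u) q = -1 * pdy (pdy u) q + - - (pdx (pdx u) q + pdy (pdy u) q)); ring.
apply: etrans (pderiv_eq_on oO s uxx Op) _.
apply: etrans (pderiv_comb oO s _ _ (smooth_on_pderiv [:: false; false] su) su Op) _.
by rewrite mulN1r mulNr.
Qed.

Section Point.
Variables (p : R * R) (K : nat).
Hypotheses (Op : O p) (lower : forall s, (size s < K)%N -> pderiv s u p = 0).

Lemma mixed_pderiv_antiperiodic j :
  (j.+2 <= K)%N -> mixed_pderiv u K j.+2 p = - mixed_pderiv u K j p.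
Proof.
move=> jK; set s := nseq j true ++ nseq (K - j.+2) false.
have size_s : size s = (K - 2)%N by rewrite size_cat !size_nseq; lia.
have count_s : count id s = j by rewrite count_cat !count_nseq mul1n mul0n addn0.
have sizeK b : size (s ++ [:: b; b]) = K by rewrite size_cat size_s /=; lia.
have countT : count id (s ++ [:: true; true]) = j.+2.
  by rewrite count_cat count_s /=; lia.
have countF : count id (s ++ [:: false; false]) = j.
  by rewrite count_cat count_s /=; lia.
have := pderiv_helmholtz s Op.
rewrite (lower (s := s)) ?size_s; last lia.
by rewrite !(pderiv_mixed oO _ su Op) !sizeK countT countF mulr0 subr0.
Qed.

Lemma dop_dirn_eval_cos_sin phi :
  dop_eval (dop_dirn (cos phi, sin phi) K) u p =
  mixed_pderiv u K 0 p * cos (K%:R * (pi / 2 - phi)) +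
  mixed_pderiv u K 1 p * sin (K%:R * (pi / 2 - phi)).
Proof.
have closed := antiperiodic2_cos_sin mixed_pderiv_antiperiodic.
rewrite (@dop_eval_symbol _ _ K u p (mixed_pderiv u K 0 p) (mixed_pderiv u K 1 p) 0
  (- (pi / 2)) (size_dop_dirn _ _)).
  by rewrite !dop_symbol_dirn add0r (addrC (- _)) cosBpihalf.
move=> s sK; rewrite (pderiv_mixed oO _ su Op) sK closed; last by rewrite -sK count_size.
by rewrite add0r (addrC (- _)) cosBpihalf.
Qed.

Lemma pderiv_order_eq0 (phi1 phi2 : R) :
  sin (K%:R * (phi1 - phi2)) != 0 ->
  dop_eval (dop_dirn (cos phi1, sin phi1) K) u p = 0 ->
  dop_eval (dop_dirn (cos phi2, sin phi2) K) u p = 0 ->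
  forall s, size s = K -> pderiv s u p = 0.
Proof.
rewrite !dop_dirn_eval_cos_sin => det dir1 dir2.
have [|a0 a1] := cramer2_eq0 dir1 dir2.
  by rewrite mulrC -sinB (_ : _ - _ = K%:R * (phi1 - phi2)) //; ring.
move=> s sK; rewrite (pderiv_mixed oO _ su Op) sK.
rewrite (antiperiodic2_cos_sin mixed_pderiv_antiperiodic) ?a0 ?a1 ?mul0r ?addr0 //.
by rewrite -sK count_size.
Qed.

End Point.

End Helmholtz.

Unset Implicit Arguments.
Set Strict Implicit.

Theorem theorem3p2 (R : realType) (Omega : set (R * R)) (lambda : R)
  (u : R * R -> R) (x0 : R * R) (h alpha theta : R) (n : nat) :
  open Omega ->
  0 < lambda ->
  L2_on Omega u ->
  smooth_on Omega u ->
  (forall p, Omega p -> - laplacian u p = lambda * u p) ->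
  Omega x0 ->
  0 < h ->
  0 < alpha < 1 ->
  (* e^- = (cos theta, sin theta), e^+ = e^- rotated by alpha*pi *)
  let em := (cos theta, sin theta) in
  let ep := (cos (theta + alpha * pi), sin (theta + alpha * pi)) in
  segment x0 ep h `<=` Omega ->
  segment x0 em h `<=` Omega ->
  (forall x, segment x0 ep h x -> u x = 0) ->
  (forall x, segment x0 em h x -> u x = 0) ->
  (3 <= n)%N ->
  (forall p q : nat, (1 <= q)%N -> (q < p)%N -> (p <= n.-1)%N ->
     alpha != q%:R / p%:R) ->
  forall s : seq bool, (size s <= n.-1)%N -> pderiv s u x0 = 0.
Proof.
move=> oO _ _ su helmholtz Ox0 h0 alpha01 em ep segp segm up um _ alpha_nfrac.
have dirn_p k : dop_eval (dop_dirn ep k) u x0 = 0.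
  exact: (@dop_dirn_eq0 _ _ _ oO su x0 ep h k h0 (cos_max _) (sin_max _) segp up).
have dirn_m k : dop_eval (dop_dirn em k) u x0 = 0.
  exact: (@dop_dirn_eq0 _ _ _ oO su x0 em h k h0 (cos_max _) (sin_max _) segm um).
suff orders k : (k <= n.-1)%N -> forall s, size s = k -> pderiv s u x0 = 0.
  by move=> s sn; exact: orders sn s erefl.
elim/ltn_ind: k => -[_ _ s /size0nil -> | K IH Kn].
  by have := dirn_m 0%N; rewrite /dop_eval big_seq1 mul1r.
have lower s : (size s < K.+1)%N -> pderiv s u x0 = 0.
  by move=> sK; apply: (IH (size s)) => //; exact: leq_trans (ltnW sK) Kn.
apply: (pderiv_order_eq0 oO su helmholtz Ox0 lower _ (dirn_p K.+1) (dirn_m K.+1)).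
rewrite (addrC theta) addrK mulrA.
by apply: sin_natmul_neq0 => // q q1 qK; exact: alpha_nfrac.
Qed.
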